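(* Let $p,q,r\in\mathbb N$ and let $\mathbf K$ be a commutative field. Suppose $A_1,\dots,A_d\in\mathrm{Rec}_{p\times r}(\mathbf K)$ and $B_1,\dots,B_e\in\mathrm{Rec}_{r\times q}(\mathbf K)$ are such that there exist matrices $\rho_{\mathcal A}(s,u)\in\mathbf K^{d\times d}$ ($0\le s<p$, $0\le u<r$) and $\rho_{\mathcal B}(u,t)\in\mathbf K^{e\times e}$ ($0\le u<r$, $0\le t<q$) with $\rho(s,u)A_i=\sum_{k=1}^d\rho_{\mathcal A}(s,u)_{k,i}A_k$ and $\rho(u,t)B_j=\sum_{l=1}^e\rho_{\mathcal B}(u,t)_{l,j}B_l$ for all $i,j$. Set $C_{ij}=A_iB_j\in\mathrm{Rec}_{p\times q}(\mathbf K)$. Then $C_{ij}[\emptyset,\emptyset]=A_i[\emptyset,\emptyset]\,B_j[\emptyset,\emptyset]$ and, for all $0\le s<p$, $0\le t<q$, $$\rho(s,t)C_{ij}=\sum_{k=1}^d\sum_{l=1}^e\Big(\sum_{u=0}^{r-1}\rho_{\mathcal A}(s,u)_{k,i}\,\rho_{\mathcal B}(u,t)_{l,j}\Big)C_{kl}.$$ Thus the $C_{ij}$ span a recursively closed subspace with shift matrices $\rho_{\mathcal C}(s,t)_{kl,ij}=\sum_{u=0}^{r-1}\rho_{\mathcal A}(s,u)_{k,i}\rho_{\mathcal B}(u,t)_{l,j}$.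
   Context: For $p,q,l\in\mathbb N$, $\mathcal M_{p\times q}^l$ is the set of pairs $(U,W)$ of words of common length $l$ with $U\in\{0,\dots,p-1\}^l$, $W\in\{0,\dots,q-1\}^l$, $\mathcal M_{p\times q}=\bigcup_l\mathcal M_{p\times q}^l$; $(\emptyset,\emptyset)$ is the empty word. Functions $A:\mathcal M_{p\times q}\to\mathbf K$ have values $A[U,W]$. Shift maps: $(\rho(S,T)A)[U,W]=A[US,WT]$; for a single letter pair $(s,t)$ we write $\rho(s,t)$. $\mathrm{Rec}_{p\times q}(\mathbf K)$ is the set of $A$ with finite-dimensional span of $\{\rho(S,T)A\}$. Matrix product: $(AB)[U,W]=\sum_{V\in\{0,\dots,r-1\}^l}A[U,V]B[V,W]$ for $(U,W)$ of length $l$. *)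

From HB Require Import structures.
From mathcomp Require Import all_boot all_order all_algebra.
Set Implicit Arguments. Unset Strict Implicit. Unset Printing Implicit Defensive.
Import GRing.Theory.
Local Open Scope ring_scope.

(* Functions on M_{p x q}: pairs (U,W) of words over {0..p-1}, {0..q-1}.
   Only pairs with size U = size W are meaningful; values elsewhere are
   irrelevant and all statements below quantify over pairs of equal length. *)
Definition wfun (K : Type) (p q : nat) := seq 'I_p -> seq 'I_q -> K.

Definition shiftw (K : Type) p q (S : seq 'I_p) (T : seq 'I_q) (A : wfun K p q)
  : wfun K p q := fun U W => A (U ++ S) (W ++ T).

Definition shift1 (K : Type) p q (s : 'I_p) (t : 'I_q) (A : wfun K p q)
  : wfun K p q := fun U W => A (rcons U s) (rcons W t).

Definition Rec (K : fieldType) p q (A : wfun K p q) : Prop :=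
  exists (n : nat) (f : 'I_n -> wfun K p q),
    forall (S : seq 'I_p) (T : seq 'I_q), size S = size T ->
      exists c : 'I_n -> K, forall U W, size U = size W ->
        shiftw S T A U W = \sum_(k < n) c k * f k U W.

Definition wmul (K : fieldType) p r q (A : wfun K p r) (B : wfun K r q)
  : wfun K p q :=
  fun U W => \sum_(V : (size U).-tuple 'I_r) A U (tval V) * B (tval V) W.

From HB Require Import structures.
From mathcomp Require Import all_boot all_order all_algebra.
Set Implicit Arguments.
Unset Strict Implicit.
Import GRing.Theory.
Local Open Scope ring_scope.

(* Splitting off the last letter of the summation word V in (AB)[Us, Wt] gives
   rho(s,t)(AB) = sum_u rho(s,u)A * rho(u,t)B; expanding both factors in the
   given bases and using bilinearity of the product yields rho_C.  A family
   closed under one-letter shifts is closed under all word shifts, so each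
   C_ij is recognizable. *)

Lemma big_tuple_rcons (R : nmodType) (T : finType) n (F : seq T -> R) :
  \sum_(W : n.+1.-tuple T) F W = \sum_(V : n.-tuple T) \sum_(u : T) F (rcons V u).
Proof.
rewrite pair_bigA /= (reindex (fun p : n.-tuple T * T => rcons_tuple p.1 p.2)) //=.
exists (fun W : n.+1.-tuple T =>
   (belast_tuple (tnth W ord0) (behead_tuple W), last (tnth W ord0) (behead W))).
- move=> [[[|v V] szV] u] _ /=; rewrite (tnth_nth u) /=.
  + by congr pair; apply: val_inj.
  + by congr pair; [apply: val_inj; rewrite /= belast_rcons | rewrite /= last_rcons].
- by move=> W _; apply: val_inj; rewrite /= -lastI; case: W => [[|w W] ?].
Qed.

Section ProductShift.

Variables (K : fieldType) (p q r : nat).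

Lemma wmul_nil (A : wfun K p r) (B : wfun K r q) :
  wmul A B [::] [::] = A [::] [::] * B [::] [::].
Proof.
rewrite /wmul (eq_bigr (fun _ => A [::] [::] * B [::] [::])).
  by rewrite sumr_const card_tuple expn0.
by move=> V _; rewrite (size0nil (size_tuple V)).
Qed.

Lemma shift1_wmul (A : wfun K p r) (B : wfun K r q) s t U W :
  shift1 s t (wmul A B) U W =
  \sum_(u < r) wmul (shift1 s u A) (shift1 u t B) U W.
Proof.
rewrite /shift1 /wmul size_rcons.
rewrite (@big_tuple_rcons _ _ _ (fun V => A (rcons U s) V * B V (rcons W t))).
by rewrite exchange_big.
Qed.

Lemma eq_wmul (A A' : wfun K p r) (B B' : wfun K r q) U W :
  (forall U V, size U = size V -> A U V = A' U V) ->
  (forall V W, size V = size W -> B V W = B' V W) ->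
  size U = size W -> wmul A B U W = wmul A' B' U W.
Proof.
move=> eqA eqB szUW; apply: eq_bigr => V _.
have szUV : size U = size V by rewrite size_tuple.
by rewrite eqA // eqB // -szUV.
Qed.

Lemma wmul_sum (I J : finType) (a : I -> K) (b : J -> K)
    (A : I -> wfun K p r) (B : J -> wfun K r q) U W :
  wmul (fun U V => \sum_k a k * A k U V) (fun V W => \sum_l b l * B l V W) U W =
  \sum_k \sum_l a k * b l * wmul (A k) (B l) U W.
Proof.
rewrite /wmul.
under eq_bigr => V _ do rewrite mulr_suml.
under eq_bigr => V _ do under eq_bigr => k _ do rewrite mulr_sumr.
rewrite exchange_big; apply: eq_bigr => k _.
rewrite exchange_big; apply: eq_bigr => l _.
rewrite mulr_sumr; apply: eq_bigr => V _.
by rewrite mulrACA.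
Qed.

Lemma wmul_shift1_closed (d e : nat)
    (A : 'I_d -> wfun K p r) (B : 'I_e -> wfun K r q)
    (rhoA : 'I_p -> 'I_r -> 'M[K]_d) (rhoB : 'I_r -> 'I_q -> 'M[K]_e) :
  (forall s u i U V, size U = size V ->
     shift1 s u (A i) U V = \sum_(k < d) rhoA s u k i * A k U V) ->
  (forall u t j V W, size V = size W ->
     shift1 u t (B j) V W = \sum_(l < e) rhoB u t l j * B l V W) ->
  forall i j s t U W, size U = size W ->
    shift1 s t (wmul (A i) (B j)) U W =
    \sum_(k < d) \sum_(l < e)
       (\sum_(u < r) rhoA s u k i * rhoB u t l j) * wmul (A k) (B l) U W.
Proof.
move=> shift1A shift1B i j s t U W szUW; rewrite shift1_wmul.
under eq_bigr => u _ do rewrite (eq_wmul (shift1A s u i) (shift1B u t j)) // wmul_sum.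
rewrite exchange_big; apply: eq_bigr => k _.
rewrite exchange_big; apply: eq_bigr => l _.
by rewrite mulr_suml.
Qed.

End ProductShift.

Lemma shiftw_cons (K : Type) p q s S t T (A : wfun K p q) U W :
  shiftw (s :: S) (t :: T) A U W = shiftw S T A (rcons U s) (rcons W t).
Proof. by rewrite /shiftw !cat_rcons. Qed.

Section ShiftClosedFamily.

Variables (K : fieldType) (p q : nat) (I : finType).
Variables (F : I -> wfun K p q) (M : 'I_p -> 'I_q -> I -> I -> K).
Hypothesis shift1F : forall s t i U W, size U = size W ->
  shift1 s t (F i) U W = \sum_k M s t k i * F k U W.

Lemma shiftw_shift_closed S T i : size S = size T ->
  exists c : I -> K, forall U W, size U = size W ->
    shiftw S T (F i) U W = \sum_k c k * F k U W.
Proof.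
elim: S T i => [|s S IH] [|t T] //= i szST.
  exists (fun k => (k == i)%:R) => U W _.
  rewrite /shiftw !cats0 (bigD1 i) //= eqxx mul1r big1 ?addr0 //.
  by move=> k /negbTE->; rewrite mul0r.
have [c hc] := IH T i (eq_add_S _ _ szST).
exists (fun k' => \sum_k c k * M s t k' k) => U W szUW.
rewrite shiftw_cons hc ?size_rcons ?szUW //.
rewrite (eq_bigr (fun k => \sum_k' c k * (M s t k' k * F k' U W))); last first.
  by move=> k _; rewrite -mulr_sumr -shift1F.
rewrite exchange_big; apply: eq_bigr => k' _.
by rewrite mulr_suml; apply: eq_bigr => k _; rewrite mulrA.
Qed.

Lemma shift_closed_Rec i : Rec (F i).
Proof.
exists #|{: I}|, (fun m => F (enum_val m)) => S T szST.
have [c hc] := shiftw_shift_closed i szST.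
exists (fun m => c (enum_val m)) => U W szUW.
by rewrite hc // (big_enum_val (fun k : I => c k * F k U W)).
Qed.

End ShiftClosedFamily.

Theorem mainTheorem6 (K : fieldType) (p q r d e : nat)
  (A : 'I_d -> wfun K p r) (B : 'I_e -> wfun K r q)
  (rhoA : 'I_p -> 'I_r -> 'M[K]_d) (rhoB : 'I_r -> 'I_q -> 'M[K]_e) :
  (forall i, Rec (A i)) ->
  (forall j, Rec (B j)) ->
  (forall (s : 'I_p) (u : 'I_r) (i : 'I_d) U V, size U = size V ->
     shift1 s u (A i) U V = \sum_(k < d) rhoA s u k i * A k U V) ->
  (forall (u : 'I_r) (t : 'I_q) (j : 'I_e) V W, size V = size W ->
     shift1 u t (B j) V W = \sum_(l < e) rhoB u t l j * B l V W) ->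
  forall (i : 'I_d) (j : 'I_e),
    Rec (wmul (A i) (B j)) /\
    wmul (A i) (B j) [::] [::] = A i [::] [::] * B j [::] [::] /\
    (forall (s : 'I_p) (t : 'I_q) U W, size U = size W ->
       shift1 s t (wmul (A i) (B j)) U W =
       \sum_(k < d) \sum_(l < e)
          (\sum_(u < r) rhoA s u k i * rhoB u t l j) * wmul (A k) (B l) U W).
Proof.
move=> _ _ shift1A shift1B i j.
have shift1C := wmul_shift1_closed shift1A shift1B.
split; [|split]; last exact: shift1C.
- apply: (shift_closed_Rec (F := fun kl => wmul (A kl.1) (B kl.2))
    (M := fun s t kl ij => \sum_(u < r) rhoA s u kl.1 ij.1 * rhoB u t kl.2 ij.2)
    _ (i, j)).
  by move=> s t [k l] U W szUW; rewrite shift1C // pair_bigA.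
- exact: wmul_nil.
Qed.
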